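(* There exists a property $\mathcal{P}$ such that for all $\varepsilon\in(0,1)$ and $t\le \mathrm{poly}(\varepsilon)\cdot\frac{n}{\log n}$, the property $\mathcal{P}$ is $\varepsilon$-testable using $\mathrm{poly}(\frac1\varepsilon)$ queries in the $t$-online-corruption model. However, for all $\alpha=\Omega\left(\frac{1}{\log\log n}\right)$ such that $\alpha+\varepsilon<1$, every $\alpha$-offline-erasure-resilient $\varepsilon$-tester for $\mathcal{P}$ requires $\widetilde{\Omega}(\log n)$ queries on inputs of length $n$.
   Context: $\widetilde{\Omega}(f)$ hides $\mathrm{polylog}(f)$ factors. A property is a set $\mathcal{P}=\bigcup_n\mathcal{P}_n$ where $\mathcal{P}_n$ consists of strings of length $n$ over an alphabet $\Sigma$. The relative Hamming distance of $x,y\in\Sigma^n$ is $\delta_H(x,y)=\Pr_{i\sim[n]}[x_i\neq y_i]$; $x$ is $\varepsilon$-far from $\mathcal{P}$ if $\delta_H(x,y)\ge\varepsilon$ for all $y\in\mathcal{P}_n$. An $\varepsilon$-tester accepts with probability $\ge 2/3$ inputs in $\mathcal{P}$ and rejects with probability $\ge 2/3$ inputs $\varepsilon$-far from $\mathcal{P}$. In the $t$-online-corruption model, the input is accessed through an adversarial oracle which initially answers query $i$ with $x_i$; after answering each query it may replace the values at up to $t$ indices by arbitrary symbols of $\Sigma$ (used for future answers), with choices depending on the input, past queries and the algorithm's code but not on future coin tosses; the tester must satisfy the tester guarantee (with respect to the original $x$) against every such oracle. Offline erasures: a string in $(\Sigma\cup\{\perp\})^n$ is $\alpha$-erased if at most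 an $\alpha$ fraction of its symbols are $\perp$; a completion agrees with it on all non-erased positions. An $\alpha$-offline-erasure-resilient $\varepsilon$-tester, given query access to an $\alpha$-erased $x$, accepts with probability $\ge 2/3$ if some completion of $x$ lies in $\mathcal{P}$ and rejects with probability $\ge 2/3$ if every completion is $\varepsilon$-far from $\mathcal{P}$. *)

From Stdlib Require Import Reals.
From mathcomp Require Import all_boot.

Set Implicit Arguments.
Unset Strict Implicit.
Unset Printing Implicit Defensive.

Definition word (S : Type) (n : nat) := 'I_n -> S.

Definition property (S : Type) := forall n : nat, word S n -> Prop.

Definition hdist (S : eqType) (n : nat) (x y : word S n) : nat :=
  #|[set i : 'I_n | x i != y i]|.

Definition far (S : eqType) (P : property S) (eps : R) (n : nat) (x : word S n) : Prop :=
  forall y : word S n, P n y -> Rle eps (Rdiv (INR (hdist x y)) (INR n)).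

(* A randomized adaptive query algorithm on inputs of length n, receiving
   answers in A: it tosses [coins] fair coins, makes exactly [nqueries]
   queries, the next query index being a function of the coins and the
   answers received so far, and finally accepts or rejects as a function of
   the coins and all answers. *)
Record tester (n : nat) (A : Type) := Tester {
  coins : nat;
  nqueries : nat;
  tquery : {ffun 'I_coins -> bool} -> seq A -> 'I_n;
  tdecide : {ffun 'I_coins -> bool} -> seq A -> bool
}.

(* Execution against an oracle whose answer to query i may depend on the
   history hq of previous queries. Returns the sequence of answers. *)
Fixpoint exec (n : nat) (A : Type) (k : nat) (qf : seq A -> 'I_n)
  (orc : seq 'I_n -> 'I_n -> A) (hq : seq 'I_n) (ha : seq A) : seq A :=
  match k with
  | 0 => ha
  | k'.+1 =>
      let i := qf ha in
      exec k' qf orc (rcons hq i) (rcons ha (orc hq i))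
  end.

Definition outcome (n : nat) (A : Type) (T : tester n A)
  (orc : seq 'I_n -> 'I_n -> A) (r : {ffun 'I_(coins T) -> bool}) : bool :=
  @tdecide n A T r (exec (nqueries T) (@tquery n A T r) orc [::] [::]).

Arguments outcome [n A] T orc r.

Definition accepts_whp (n : nat) (A : Type) (T : tester n A)
  (orc : seq 'I_n -> 'I_n -> A) : Prop :=
  2 * 2 ^ coins T <= 3 * #|[set r : {ffun 'I_(coins T) -> bool} | outcome T orc r]|.

Definition rejects_whp (n : nat) (A : Type) (T : tester n A)
  (orc : seq 'I_n -> 'I_n -> A) : Prop :=
  2 * 2 ^ coins T <= 3 * #|[set r : {ffun 'I_(coins T) -> bool} | ~~ outcome T orc r]|.

(* t-online-corruption adversary for input x: adv h is the current (possibly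
   corrupted) string after the queries h have been answered. Its choices
   depend on x, the past queries (hence past answers) and (since it is
   quantified after the tester) the algorithm's code, but not on coins. *)
Definition online_adversary (S : eqType) (n t : nat) (x : word S n)
  (adv : seq 'I_n -> word S n) : Prop :=
  (forall i, adv [::] i = x i) /\
  (forall (h : seq 'I_n) (i : 'I_n), hdist (adv h) (adv (rcons h i)) <= t).

Definition online_oracle (S : Type) (n : nat) (adv : seq 'I_n -> word S n)
  : seq 'I_n -> 'I_n -> S := fun hq i => adv hq i.

Definition online_tester (S : eqType) (P : property S) (eps : R) (t n : nat)
  (T : tester n S) : Prop :=
  forall (x : word S n) (adv : seq 'I_n -> word S n),
    online_adversary t x adv ->
    (P n x -> accepts_whp T (online_oracle adv)) /\
    (far P eps x -> rejects_whp T (online_oracle adv)).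

(* Strings over S \cup {bot}; None plays the role of bot. *)
Definition erased_word (S : Type) (n : nat) := 'I_n -> option S.

Definition alpha_erased (S : eqType) (n : nat) (alpha : R) (w : erased_word S n) : Prop :=
  Rle (INR #|[set i : 'I_n | w i == None]|) (Rmult alpha (INR n)).

Definition completion (S : Type) (n : nat) (w : erased_word S n) (y : word S n) : Prop :=
  forall (i : 'I_n) (s : S), w i = Some s -> y i = s.

Definition erased_oracle (S : Type) (n : nat) (w : erased_word S n)
  : seq 'I_n -> 'I_n -> option S := fun _ i => w i.

Definition er_tester (S : eqType) (P : property S) (alpha eps : R) (n : nat)
  (T : tester n (option S)) : Prop :=
  forall w : erased_word S n, alpha_erased alpha w ->
    ((exists y, completion w y /\ P n y) -> accepts_whp T (erased_oracle w)) /\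
    ((forall y, completion w y -> far P eps y) -> rejects_whp T (erased_oracle w)).

(* The property consists of words whose position 0 encodes a polynomial of
   degree at most log2 n over a prime field F_p with p > n and whose other
   positions hold its values.

   Online: read position 0, which no adversary can have corrupted yet, and
   compare the codeword it determines with s ~ 8/eps nearly uniform positions.
   When the j-th sample is drawn at most j t positions have been corrupted, and
   t <= eps^2 n / log n keeps s^2 t below n / 6, so a codeword survives all
   checks with probability >= 2/3 while an eps-far word fails one of them with
   probability >= 2/3.

   Offline: erase position 0 and let K = log2 n + 1.  Fix the coins of a tester
   making at most K queries.  On the word of a polynomial v of degree < K it
   sees the same values as on the word of v - u + X^K, where u (of degree < K)
   interpolates X^K at the positions it queries.  The map v |-> v - u is
   injective, so these degree-K words, which are far from every codeword, are
   accepted at least as often as the completable low-degree words; no tester can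
   accept the latter and reject the former.  Hence more than K >= ln n queries
   are needed. *)

From Stdlib Require Import Reals Lra ZArith.
From mathcomp Require Import all_boot all_algebra zify.

Set Implicit Arguments.
Unset Strict Implicit.
Unset Printing Implicit Defensive.

Import GRing.Theory.

Lemma sq_le_16_expn (k : nat) : k.+2 * k.+2 <= 16 * 2 ^ k.
Proof. by elim: k => [|[|k] IH] //; rewrite expnS; nia. Qed.

Lemma trunc_log_sq_le (n : nat) :
  0 < n -> (trunc_log 2 n).+2 * (trunc_log 2 n).+2 <= 16 * n.
Proof.
move=> n_gt0; apply: leq_trans (sq_le_16_expn _) _.
by rewrite leq_mul2l trunc_logP.
Qed.

Lemma expn_sub_le (M a s : nat) : a <= M -> M ^ s - a ^ s <= (M - a) * (s * M ^ s.-1).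
Proof.
move=> aM; rewrite subn_exp leq_mul2l; apply/orP; right.
rewrite -[s in s * _]card_ord -sum_nat_const; apply: leq_sum => i _.
have i_le : i <= s.-1 by have := ltn_ord i; lia.
rewrite -{2}(subnK i_le) expnD leq_mul2l; apply/orP; right.
by case: (nat_of_ord i) => // j; rewrite leq_exp2r.
Qed.

Lemma acceptance_margin (M lo s beta : nat) :
  lo <= M -> M - lo <= beta -> 3 * s * beta <= M -> 2 * M ^ s <= 3 * lo ^ s.
Proof.
move=> loM gap small.
have sub_le := expn_sub_le s loM.
have pow_le : lo ^ s <= M ^ s by case: s {sub_le small} => // s; rewrite leq_exp2r.
have : 3 * ((M - lo) * (s * M ^ s.-1)) <= M ^ s.
  case: s {sub_le pow_le} small => [|s] small; first by rewrite !muln0.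
  rewrite expnS /=; apply: leq_trans (_ : 3 * s.+1 * beta * M ^ s <= _); first nia.
  by rewrite leq_mul2r small orbT.
lia.
Qed.

Lemma acceptance_budget (n M s t : nat) :
  0 < n -> n <= M -> 6 * s * s * t <= n -> 3 * s * (s * t * (M %/ n).+1) <= M.
Proof.
move=> n_gt0 nM budget.
have q_gt0 : 0 < M %/ n by rewrite divn_gt0.
have := leq_divM M n; move: (M %/ n) q_gt0 => q q_gt0 qM; nia.
Qed.

Section RealBounds.
Local Open Scope R_scope.

Lemma INR_expn (m k : nat) : INR (m ^ k) = INR m ^ k.
Proof. by elim: k => [|k IH]; rewrite ?expn0 // expnS mult_INR IH. Qed.

Lemma Rle_div_iff (a b c : R) : 0 < c -> a <= b / c <-> a * c <= b.
Proof.
move=> c_gt0; have E : b / c * c = b by field; lra.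
by split=> H; nra.
Qed.

Lemma bernoulli_ineq (x : R) (s : nat) : -1 <= x -> 1 + INR s * x <= (1 + x) ^ s.
Proof.
move=> x_ge; elim: s => [|s IH]; first by rewrite /=; lra.
rewrite S_INR /=.
have : 0 <= INR s * (x * x) by apply: Rmult_le_pos; [exact: pos_INR | nra].
have : (1 + INR s * x) * (1 + x) <= (1 + x) ^ s * (1 + x).
  by apply: Rmult_le_compat_r; lra.
nra.
Qed.

Lemma pow_one_sub_le_third (u : R) (s : nat) :
  0 < u < 1 -> 2 < INR s * u -> (1 - u) ^ s <= / 3.
Proof.
move=> u01 su.
have big : 3 < (1 + u) ^ s by have := @bernoulli_ineq u s; lra.
have prod_le1 : (1 - u) ^ s * (1 + u) ^ s <= 1.
  rewrite -Rpow_mult_distr -{3}(pow1 s).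
  by apply: pow_incr; split; nra.
have : 0 <= (1 - u) ^ s by apply: pow_le; lra.
move: big prod_le1; move: ((1 - u) ^ s) ((1 + u) ^ s) => a b; nra.
Qed.

Lemma exists_nat_between (x : R) : 0 < x -> exists s : nat, x < INR s <= x + 1.
Proof.
move=> x_gt0; have [lo hi] := archimed x.
exists (Z.to_nat (up x)); rewrite INR_IZR_INZ Z2Nat.id; first lra.
by apply: le_IZR; lra.
Qed.

Lemma ln_le_trunc_log (n : nat) : (0 < n)%N -> ln (INR n) <= INR (trunc_log 2 n).+1.
Proof.
move=> n_gt0; set k := (trunc_log 2 n).+1.
have n_lt : INR n < 2 ^ k.
  by have /ltP/lt_INR := trunc_log_ltn n (isT : (1 < 2)%N); rewrite INR_expn.
have ln2_lt1 : ln 2 < 1.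
  rewrite -(ln_exp 1); apply: ln_increasing; first lra.
  by have := exp_ineq1 1; lra.
have := ln_increasing (INR n) (2 ^ k) (lt_0_INR _ (elimT ltP n_gt0)) n_lt.
rewrite ln_pow; last lra.
have := ln_lt_2; have := pos_INR k; nra.
Qed.

Lemma trunc_log_eventually_le (c : R) : 0 < c ->
  exists N : nat, forall n : nat, (N <= n)%N -> INR (trunc_log 2 n).+2 <= c * INR n.
Proof.
move=> c_gt0; have [N N_gt] := INR_unbounded (16 / (c * c)).
exists N.+1 => n Nn.
have n_gt0 : (0 < n)%N by apply: leq_trans Nn.
have n_big : 16 < c * c * INR n.
  have : INR N <= INR n by apply/le_INR/leP/ltnW.
  have : 16 / (c * c) * (c * c) = 16 by field; lra.
  have : 0 < c * c by nra.
  move: N_gt; move: (16 / (c * c)) => x; nra.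
have := le_INR _ _ (elimT leP (trunc_log_sq_le n_gt0)).
rewrite !mult_INR.
have -> : INR 16 = 16 by rewrite INR_IZR_INZ.
have n_pos : 0 < INR n by apply/lt_0_INR/ltP.
have : 16 * INR n <= (c * INR n) * (c * INR n) by nra.
have : 0 <= c * INR n by nra.
have := pos_INR (trunc_log 2 n).+2.
move: (INR _.+2) (c * INR n) => a b; nra.
Qed.

Lemma mul_ge1_of_ge_div_lnln (c alpha : R) (n : nat) : (4 <= n)%N ->
  INR (trunc_log 2 n).+2 <= c * INR n -> c / ln (ln (INR n)) <= alpha ->
  1 <= alpha * INR n.
Proof.
move=> n_ge4 small le_alpha.
have n_gt0 : (0 < n)%N by apply: leq_trans n_ge4.
have ln_gt1 : 1 < ln (INR n).
  rewrite -(ln_exp 1); apply: ln_increasing; first exact: exp_pos.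
  have : INR 4 <= INR n by apply/le_INR/leP.
  have -> : INR 4 = 4 by rewrite INR_IZR_INZ.
  by have := exp_le_3; lra.
have lnln_gt0 : 0 < ln (ln (INR n)) by rewrite -ln_1; apply: ln_increasing; lra.
have lnln_lt : ln (ln (INR n)) < ln (INR n).
  by have := exp_ineq1 (ln (ln (INR n))); rewrite exp_ln; lra.
have := ln_le_trunc_log n_gt0; rewrite !S_INR in small * => ln_le.
have ll_lt : ln (ln (INR n)) < c * INR n by lra.
move: (ln (ln (INR n))) lnln_gt0 ll_lt le_alpha => ll ll_gt0 ll_lt le_alpha.
have an_gt1 : 1 < c / ll * INR n.
  have : c / ll * INR n * ll = c * INR n by field; lra.
  by move: (c / ll * INR n) (c * INR n) ll_lt => x y ? ?; nra.
have := pos_INR n; nra.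
Qed.

End RealBounds.

(** * Hamming distance and runs of testers *)

Section Hamming.
Variables (S : eqType) (n : nat).
Implicit Types x y z : word S n.

Lemma hdistC x y : hdist x y = hdist y x.
Proof. by apply: eq_card => i; rewrite !inE eq_sym. Qed.

Lemma eq_hdist x x' y : x =1 x' -> hdist x y = hdist x' y.
Proof. by move=> E; apply: eq_card => i; rewrite !inE E. Qed.

Lemma hdistxx x : hdist x x = 0.
Proof. by apply/eqP; rewrite cards_eq0; apply/eqP/setP => i; rewrite !inE eqxx. Qed.

Lemma hdist_le x y : hdist x y <= n.
Proof. by rewrite -{2}(card_ord n) max_card. Qed.

Lemma hdist_triangle x y z : hdist x z <= hdist x y + hdist y z.
Proof.
apply: leq_trans (leq_card_setU _ _); apply: subset_leq_card.
by apply/subsetP => i; rewrite !inE; case: (x i =P y i) => [->|]; rewrite ?orbT.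
Qed.

End Hamming.

Section Runs.
Variables (n : nat) (A : Type).

Fixpoint queries (k : nat) (qf : seq A -> 'I_n) (w : 'I_n -> A) (ha : seq A) : seq 'I_n :=
  if k is k'.+1 then qf ha :: queries k' qf w (rcons ha (w (qf ha))) else [::].

Lemma size_queries k qf w ha : size (queries k qf w ha) = k.
Proof. by elim: k ha => //= k IH ha; rewrite IH. Qed.

Lemma exec_eq_on_queries k qf (w w' : 'I_n -> A) hq ha :
  {in queries k qf w ha, w' =1 w} ->
  exec k qf (fun _ => w') hq ha = exec k qf (fun _ => w) hq ha /\
  queries k qf w' ha = queries k qf w ha.
Proof.
elim: k hq ha => [|k IH] hq ha //= eq_ww'.
have -> : w' (qf ha) = w (qf ha) by apply: eq_ww'; rewrite inE eqxx.
have eq_rest : {in queries k qf w (rcons ha (w (qf ha))), w' =1 w}.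
  by move=> i iQ; apply: eq_ww'; rewrite inE iQ orbT.
by have [-> ->] := IH (rcons hq (qf ha)) _ eq_rest.
Qed.

Fixpoint answers (orc : seq 'I_n -> 'I_n -> A) (hq l : seq 'I_n) : seq A :=
  if l is i :: l' then orc hq i :: answers orc (rcons hq i) l' else [::].

Lemma exec_nonadaptive (L : seq 'I_n) (i0 : 'I_n) qf orc k ha :
  (forall a, qf a = nth i0 L (size a)) -> size ha + k <= size L ->
  exec k qf orc (take (size ha) L) ha =
  ha ++ answers orc (take (size ha) L) (take k (drop (size ha) L)).
Proof.
move=> qfE; elim: k ha => [|k IH] ha k_le /=; first by rewrite take0 cats0.
have ha_lt : size ha < size L by lia.
rewrite qfE -take_nth // (drop_nth i0 ha_lt) /=.
have := IH (rcons ha (orc (take (size ha) L) (nth i0 L (size ha)))).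
rewrite size_rcons => -> //; last by rewrite addSnnS.
by rewrite cat_rcons -take_nth.
Qed.

Lemma card_outcome_split (T : tester n A) orc :
  #|[set r | outcome T orc r]| + #|[set r | ~~ outcome T orc r]| = 2 ^ coins T.
Proof.
have <- : #|{ffun 'I_(coins T) -> bool}| = 2 ^ coins T.
  by rewrite card_ffun card_bool card_ord.
rewrite -(cardsC [set r | outcome T orc r]).
by congr (_ + _); apply: eq_card => r; rewrite !inE.
Qed.

End Runs.

Lemma sum_card_exchange (I J : finType) (R : I -> J -> bool) :
  \sum_i #|[set j | R i j]| = \sum_j #|[set i | R i j]|.
Proof.
have card_sum (U V : finType) (P : U -> V -> bool) u : #|[set v | P u v]| = \sum_v P u v.
  by rewrite -sum1_card big_mkcond /=; apply: eq_bigr => v _; rewrite inE; case: (P u v).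
under eq_bigr do rewrite card_sum.
by rewrite exchange_big; apply: eq_bigr => j _; rewrite (card_sum _ _ (fun j i => R i j)).
Qed.

Lemma no_tester_if_dominated (n : nat) (A : Type) (I : finType) (T : tester n A)
    (yes no : I -> seq 'I_n -> 'I_n -> A) (i0 : I) :
  (forall r, #|[set i | outcome T (yes i) r]| <= #|[set i | outcome T (no i) r]|) ->
  (forall i, accepts_whp T (yes i)) -> ~ (forall i, rejects_whp T (no i)).
Proof.
move=> dom acc rej.
pose N := \sum_(i : I) 2 ^ coins T.
pose acc_yes := \sum_i #|[set r | outcome T (yes i) r]|.
pose acc_no := \sum_i #|[set r | outcome T (no i) r]|.
pose rej_no := \sum_i #|[set r | ~~ outcome T (no i) r]|.
have acc_le : acc_yes <= acc_no.
  rewrite /acc_yes /acc_no (sum_card_exchange (fun i r => outcome T (yes i) r)).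
  rewrite (sum_card_exchange (fun i r => outcome T (no i) r)).
  by apply: leq_sum => r _; exact: dom.
have acc_ge : 2 * N <= 3 * acc_yes.
  by rewrite /N /acc_yes !big_distrr; apply: leq_sum => i _; exact: acc.
have rej_ge : 2 * N <= 3 * rej_no.
  by rewrite /N /rej_no !big_distrr; apply: leq_sum => i _; exact: rej.
have split_no : acc_no + rej_no = N.
  by rewrite /acc_no /rej_no -big_split; apply: eq_bigr => i _; exact: card_outcome_split.
have N_gt0 : 0 < N.
  by rewrite /N sum_nat_const muln_gt0 expn_gt0 andbT; apply/card_gt0P; exists i0.
clearbody N acc_yes acc_no rej_no; lia.
Qed.

(** * Polynomials of degree K are indistinguishable from lower ones *)

Section Interpolation.
Local Open Scope ring_scope.
Variable F : fieldType.

Lemma interpolation (g : F -> F) (s : seq F) :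
  exists2 q : {poly F}, (size q <= size (undup s))%N & {in s, forall z, q.[z] = g z}.
Proof.
elim: s => [|z s [q size_q qE]]; first by exists 0; rewrite ?size_poly0.
rewrite /=; case: ifPn => zs.
  by exists q => // x; rewrite inE => /predU1P [->|]; apply: qE.
pose vanish := \prod_(w <- undup s) ('X - w%:P).
have vanish_z : vanish.[z] != 0.
  rewrite horner_prod prodf_seq_neq0; apply/allP => w ws /=.
  by rewrite hornerXsubC subr_eq0; apply: contraNneq zs => ->; rewrite -mem_undup.
have vanish_s x : x \in s -> vanish.[x] = 0.
  move=> xs; apply/eqP; rewrite horner_prod prodf_seq_eq0; apply/hasP.
  by exists x; rewrite ?mem_undup //= hornerXsubC subrr.
exists (q + ((g z - q.[z]) / vanish.[z]) *: vanish).
  apply: (leq_trans (size_polyD _ _)); rewrite geq_max /= (leq_trans size_q) //.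
  by apply: (leq_trans (size_scale_leq _ _)); rewrite size_prod_XsubC.
move=> x; rewrite inE => /predU1P [->|xs]; rewrite hornerD hornerZ.
  by rewrite divfK // addrC subrK.
by rewrite (vanish_s x xs) mulr0 addr0 qE.
Qed.

End Interpolation.

Section YesNoWords.
Local Open Scope ring_scope.
Variables (F : finFieldType) (S : eqType) (m K : nat) (pt : 'I_m -> F) (enc : F -> S).

Definition yes_word (v : 'rV[F]_K) : erased_word S m :=
  fun i => if val i == 0%N then None else Some (enc (rVpoly v).[pt i]).

Definition no_word (v : 'rV[F]_K) : erased_word S m :=
  fun i => if val i == 0%N then None else Some (enc ((rVpoly v).[pt i] + pt i ^+ K)).

Lemma alpha_erased_at0 (alpha : R) (w : erased_word S m) :
  (forall i, val i != 0%N -> w i != None) -> Rle 1 (Rmult alpha (INR m)) ->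
  alpha_erased alpha w.
Proof.
move=> w_def alpha_ge.
suff le1 : (#|[set i | w i == None]| <= 1)%N.
  by apply: Rle_trans alpha_ge; apply: (le_INR _ 1); apply/leP.
have val0 k : w k == None -> val k = 0%N.
  by move=> wk; apply/eqP; apply: contraTT wk; exact: w_def.
by apply/card_le1_eqP => i j; rewrite !inE => /val0 i0 /val0 j0; apply: val_inj; rewrite i0 j0.
Qed.

Lemma alpha_erased_yes_word alpha v :
  Rle 1 (Rmult alpha (INR m)) -> alpha_erased alpha (yes_word v).
Proof. by apply: alpha_erased_at0 => i; rewrite /yes_word => /negbTE ->. Qed.

Lemma alpha_erased_no_word alpha v :
  Rle 1 (Rmult alpha (INR m)) -> alpha_erased alpha (no_word v).
Proof. by apply: alpha_erased_at0 => i; rewrite /no_word => /negbTE ->. Qed.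

Definition interpolates_XK (Q : seq 'I_m) (u : 'rV[F]_K) : bool :=
  all (fun i => (rVpoly u).[pt i] == pt i ^+ K) Q.

Lemma exists_interpolates_XK Q : (size Q <= K)%N -> exists u, interpolates_XK Q u.
Proof.
move=> size_Q; have [q size_q qE] := interpolation (fun z => z ^+ K) (map pt Q).
have size_q_K : (size q <= K)%N.
  by rewrite (leq_trans size_q) // (leq_trans (size_undup _)) ?size_map.
exists (poly_rV q); apply/allP => i iQ.
by rewrite poly_rV_K // qE ?map_f.
Qed.

Definition XK_interpolant Q : 'rV[F]_K := odflt 0 [pick u | interpolates_XK Q u].

Lemma XK_interpolantP Q : (size Q <= K)%N -> interpolates_XK Q (XK_interpolant Q).
Proof.
move=> /exists_interpolates_XK [u Qu]; rewrite /XK_interpolant.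
by case: pickP => [v -> // | /(_ u)]; rewrite Qu.
Qed.

Variable T : tester m (option S).
Hypothesis few_queries : (nqueries T <= K)%N.

Section FixedCoins.
Variable r : {ffun 'I_(coins T) -> bool}.

Let yes_queries v := queries (nqueries T) (tquery r) (yes_word v) [::].
Let shift v := v - XK_interpolant (yes_queries v).

Lemma no_word_shift v : {in yes_queries v, no_word (shift v) =1 yes_word v}.
Proof.
move=> i iQ; rewrite /no_word /yes_word; case: eqP => // _.
have Q_small : (size (yes_queries v) <= K)%N by rewrite size_queries.
have /allP /(_ i iQ) /eqP := XK_interpolantP Q_small.
by rewrite /shift linearB hornerD hornerN => ->; rewrite subrK.
Qed.

Lemma outcome_no_word_shift v :
  outcome T (erased_oracle (no_word (shift v))) r = outcome T (erased_oracle (yes_word v)) r.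
Proof. by rewrite /outcome; have [-> _] := exec_eq_on_queries [::] (@no_word_shift v). Qed.

Lemma shift_inj : injective shift.
Proof.
move=> v1 v2 eq12.
have same_queries : yes_queries v1 = yes_queries v2.
  have [_ Q1] := exec_eq_on_queries [::] (@no_word_shift v1).
  have [_ Q2] := exec_eq_on_queries [::] (@no_word_shift v2).
  by rewrite /yes_queries -Q1 -Q2 eq12.
by move: eq12; rewrite /shift same_queries => /addIr.
Qed.

Lemma card_accept_yes_le_no :
  (#|[set v | outcome T (erased_oracle (yes_word v)) r]| <=
   #|[set v | outcome T (erased_oracle (no_word v)) r]|)%N.
Proof.
rewrite -(card_imset _ shift_inj); apply: subset_leq_card.
apply/subsetP => w /imsetP [v]; rewrite inE => acc ->.
by rewrite inE outcome_no_word_shift.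
Qed.

End FixedCoins.

Lemma few_queries_cannot_separate :
  (forall v, accepts_whp T (erased_oracle (yes_word v))) ->
  ~ (forall v, rejects_whp T (erased_oracle (no_word v))).
Proof. exact: (no_tester_if_dominated 0 card_accept_yes_le_no). Qed.

End YesNoWords.

(** * The property *)

Definition modulus (n : nat) : nat := sval (prime_above n).

Lemma modulus_gt n : n < modulus n.
Proof. by rewrite /modulus; case: prime_above. Qed.

Lemma modulus_prime n : prime (modulus n).
Proof. by rewrite /modulus; case: prime_above. Qed.

Definition ncoef (n : nat) : nat := (trunc_log 2 n).+1.

Section Codewords.
Local Open Scope ring_scope.

Definition code_poly (n a : nat) : {poly 'F_(modulus n)} :=
  \poly_(j < ncoef n) (nth 0%N (CodeSeq.decode a) j)%:R.

Definition codeword (n a : nat) : word nat n :=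
  fun i => if val i == 0%N then a else val (code_poly n a).[(val i)%:R].

End Codewords.
Arguments codeword : clear implicits.

Definition codewords : property nat := fun n x => exists a, x =1 codeword n a.
Arguments codewords : clear implicits.

(** * Lower bound for offline-erasure-resilient testers *)

Section LowerBound.
Local Open Scope ring_scope.
Variable n : nat.
Local Notation F := 'F_(modulus n).

Definition point (i : 'I_n) : F := (val i)%:R.

Lemma natr_valF (x : F) : (val x)%:R = x.
Proof.
apply: val_inj; rewrite /= val_Fp_nat ?modulus_prime // modn_small //.
by rewrite -{2}(Fp_cast (modulus_prime n)) ltn_ord.
Qed.

Lemma point_inj : injective point.
Proof.
have val_point i : val (point i) = val i.
  by rewrite /point /= val_Fp_nat ?modulus_prime // modn_small // (ltn_trans _ (modulus_gt n)).
by move=> i j /(congr1 val); rewrite !val_point => /val_inj.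
Qed.

Lemma code_poly_rV (v : 'rV[F]_(ncoef n)) :
  code_poly n (CodeSeq.code [seq val (v 0 j) | j <- enum 'I_(ncoef n)]) = rVpoly v.
Proof.
apply/polyP => j; rewrite coef_poly coef_rVpoly CodeSeq.codeK.
case: insubP => [k _ <- | j_ge]; last by rewrite ifN.
by rewrite ltn_ord (nth_map k) ?size_enum_ord ?ltn_ord //= nth_ord_enum natr_valF.
Qed.

Lemma yes_word_completable (v : 'rV[F]_(ncoef n)) :
  exists y, completion (yes_word point val v) y /\ codewords n y.
Proof.
set a := CodeSeq.code [seq val (v 0 j) | j <- enum 'I_(ncoef n)].
exists (codeword n a); split; last by exists a.
by move=> i s; rewrite /yes_word /codeword; case: eqP => // _ [<-]; rewrite code_poly_rV.
Qed.

Lemma hdist_no_word_codeword (v : 'rV[F]_(ncoef n)) (y : word nat n) (a : nat) :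
  completion (no_word point val v) y -> (n.-1 - ncoef n <= hdist y (codeword n a))%N.
Proof.
move=> y_compl; set K := ncoef n.
pose D := rVpoly v + 'X^K - code_poly n a.
have size_D : size D = K.+1.
  have size_XK : size ('X^K - code_poly n a) = K.+1.
    by rewrite size_polyDl size_polyXn // size_polyN ltnS size_poly.
  by rewrite /D -addrA addrC size_polyDl size_XK // ltnS size_poly.
pose agree := [set i : 'I_n | (val i != 0%N) && (y i == codeword n a i)].
have agree_roots : all (root D) (map point (enum agree)).
  apply/allP => x /mapP [i]; rewrite mem_enum inE => /andP [i0 /eqP y_eq] ->.
  have y_i : y i = val ((rVpoly v).[point i] + point i ^+ K).
    by apply: y_compl; rewrite /no_word (negbTE i0).
  move: y_eq; rewrite y_i /codeword (negbTE i0) => /val_inj eq_vals.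
  by rewrite /root /D !hornerE eq_vals subrr.
have card_agree : (#|agree| <= K)%N.
  have := max_poly_roots _ agree_roots; rewrite size_map -cardE size_D ltnS; apply.
    by rewrite -size_poly_eq0 size_D.
  by rewrite map_inj_uniq ?enum_uniq //; exact: point_inj.
have card_zero : (#|[set i : 'I_n | val i == 0%N]| <= 1)%N.
  by apply/card_le1_eqP => i j; rewrite !inE => /eqP i0 /eqP j0; apply: val_inj; rewrite i0 j0.
have cover : [set: 'I_n] \subset
    agree :|: [set i | y i != codeword n a i] :|: [set i : 'I_n | val i == 0%N].
  by apply/subsetP => i _; rewrite !inE; case: eqP; case: eqP.
have le_n : (n <= K + hdist y (codeword n a) + 1)%N.
  have := subset_leq_card cover; rewrite cardsT card_ord => /leq_trans; apply.
  apply: leq_trans (leq_card_setU _ _).1 _; rewrite leq_add //.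
  by apply: leq_trans (leq_card_setU _ _).1 _; rewrite leq_add.
lia.
Qed.

End LowerBound.

Section ErasureLowerBound.
Local Open Scope R_scope.

Lemma er_tester_ncoef_lt (n : nat) (alpha eps : R) (T : tester n (option nat)) :
  1 <= alpha * INR n -> eps * INR n <= INR (n.-1 - ncoef n) ->
  er_tester codewords alpha eps T -> (ncoef n < nqueries T)%N.
Proof.
move=> alpha_ge eps_le T_ok; rewrite ltnNge; apply/negP => few.
have [n0|n_gt0] := posnP n; first by move: alpha_ge; rewrite n0 Rmult_0_r; lra.
apply: (few_queries_cannot_separate few) => v.
  have [accept _] := T_ok _ (alpha_erased_yes_word (@point n) val v alpha_ge).
  exact/accept/yes_word_completable.
have [_ reject] := T_ok _ (alpha_erased_no_word (@point n) val v alpha_ge).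
apply: reject => y y_compl z [a z_code].
rewrite hdistC (eq_hdist _ z_code) hdistC (Rle_div_iff _ _ (lt_0_INR _ (elimT ltP n_gt0))).
apply: Rle_trans eps_le _; apply/le_INR/leP; exact: hdist_no_word_codeword y_compl.
Qed.

Lemma erasure_lower_bound (eps c1 : R) : 0 < eps < 1 -> 0 < c1 ->
  exists n0 : nat, forall n : nat, (n0 <= n)%N ->
  forall alpha : R, c1 / ln (ln (INR n)) <= alpha ->
  forall T : tester n (option nat), er_tester codewords alpha eps T ->
  ln (INR n) <= INR (nqueries T).
Proof.
move=> eps01 c1_gt0; have eps'_gt0 : 0 < 1 - eps by lra.
have [N1 N1_ok] := trunc_log_eventually_le c1_gt0.
have [N2 N2_ok] := trunc_log_eventually_le eps'_gt0.
exists (maxn 4 (maxn N1 N2)) => n; rewrite !geq_max => /and3P [n_ge4 n_ge1 n_ge2].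
move=> alpha le_alpha T T_ok.
have n_gt0 : (0 < n)%N by apply: leq_trans n_ge4.
have alpha_ge := mul_ge1_of_ge_div_lnln n_ge4 (N1_ok n n_ge1) le_alpha.
have eps_le : eps * INR n <= INR (n.-1 - ncoef n).
  have small := N2_ok n n_ge2.
  have le_n : ((trunc_log 2 n).+2 <= n)%N by apply/leP/INR_le; have := pos_INR n; nra.
  have -> : (n.-1 - ncoef n = n - (trunc_log 2 n).+2)%N by rewrite /ncoef; lia.
  by rewrite minus_INR; [lra | exact/leP].
apply: Rle_trans (ln_le_trunc_log n_gt0) _; apply/le_INR/leP/ltnW.
exact: er_tester_ncoef_lt alpha_ge eps_le T_ok.
Qed.

End ErasureLowerBound.

(** * Sampling positions with coins *)

Section SplitCoins.
Variables (T : finType) (a c : nat).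

Definition lblock (r : {ffun 'I_(a + c) -> T}) : {ffun 'I_a -> T} :=
  [ffun i => r (lshift c i)].
Definition rblock (r : {ffun 'I_(a + c) -> T}) : {ffun 'I_c -> T} :=
  [ffun i => r (rshift a i)].

Lemma blocks_bij : bijective (fun r => (lblock r, rblock r)).
Proof.
exists (fun uv : {ffun 'I_a -> T} * {ffun 'I_c -> T} =>
  [ffun i => match split i with inl j => uv.1 j | inr j => uv.2 j end]).
  move=> r; apply/ffunP => i; rewrite ffunE -[in RHS](splitK i).
  by case: (split i) => j /=; rewrite ffunE.
case=> u v /=; congr (_, _); apply/ffunP => i; rewrite !ffunE.
  by rewrite (unsplitK (inl _ i)).
by rewrite (unsplitK (inr _ i)).
Qed.

Lemma card_blocks (Phi : {ffun 'I_a -> T} -> {ffun 'I_c -> T} -> bool) :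
  #|[set r | Phi (lblock r) (rblock r)]| = \sum_u #|[set v | Phi u v]|.
Proof.
have -> : #|[set r | Phi (lblock r) (rblock r)]| = #|[set uv | Phi uv.1 uv.2]|.
  rewrite -(on_card_preimset (onW_bij _ blocks_bij)).
  by apply: eq_card => r; rewrite !inE.
rewrite -sum1dep_card (eq_bigl (fun uv => true && Phi uv.1 uv.2)) //.
rewrite -(pair_big_dep (fun _ => true) Phi (fun _ _ => 1)) /=.
by apply: eq_bigr => u _; rewrite sum1dep_card.
Qed.

End SplitCoins.

Lemma card_sum_bounds (U V : finType) (P : pred U) (Q : U -> pred V) lo hi lo' hi' :
  lo <= #|[set u | P u]| <= hi -> (forall u, P u -> lo' <= #|[set v | Q u v]| <= hi') ->
  lo * lo' <= \sum_u #|[set v | P u && Q u v]| <= hi * hi'.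
Proof.
move=> /andP [lo_le le_hi] Q_bounds.
rewrite (bigID P) /= [X in _ + X]big1 ?addn0; last first.
  by move=> u /negbTE Pu; apply/eqP; rewrite cards_eq0; apply/eqP/setP => v; rewrite !inE Pu.
have card_PQ u : P u -> #|[set v | P u && Q u v]| = #|[set v | Q u v]|.
  by move=> Pu; apply: eq_card => v; rewrite !inE Pu.
apply/andP; split.
  apply: (@leq_trans (#|[set u | P u]| * lo')); first by rewrite leq_mul2r lo_le orbT.
  rewrite -sum_nat_cond_const; apply: leq_sum => u Pu.
  by rewrite card_PQ //; case/andP: (Q_bounds u Pu).
apply: (@leq_trans (#|[set u | P u]| * hi')); last by rewrite leq_mul2r le_hi orbT.
rewrite -sum_nat_cond_const; apply: leq_sum => u Pu.
by rewrite card_PQ //; case/andP: (Q_bounds u Pu).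
Qed.

Section Sampling.
Variables (n : nat) (n_gt0 : 0 < n).

Definition ord_mod (v : nat) : 'I_n := Ordinal (ltn_pmod v n_gt0).

Lemma card_ord_mod_ge (M : nat) (A : {set 'I_n}) :
  #|A| * (M %/ n) <= #|[set v : 'I_M | ord_mod v \in A]|.
Proof.
have pack_lt (i : 'I_n) (j : 'I_(M %/ n)) : i + j * n < M.
  by have := leq_divM M n; have := ltn_ord i; have := ltn_ord j; nia.
pose pack (ij : 'I_n * 'I_(M %/ n)) : 'I_M := Ordinal (pack_lt ij.1 ij.2).
have pack_mod ij : val (pack ij) %% n = ij.1.
  by case: ij => i j; rewrite /= addnC modnMDl modn_small.
have pack_div ij : val (pack ij) %/ n = ij.2.
  by case: ij => i j; rewrite /= addnC divnMDl // (divn_small (ltn_ord i)) addn0.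
have pack_inj : injective pack.
  move=> [i j] [i' j'] E; have := pack_mod (i, j); have := pack_div (i, j).
  by rewrite E pack_mod pack_div /= => /val_inj <- /val_inj <-.
rewrite -[M %/ n]card_ord -cardsT -cardsX -(card_imset _ pack_inj).
apply: subset_leq_card; apply/subsetP => v /imsetP [[i j]].
rewrite in_setX => /andP [iA _] ->; rewrite inE.
by have -> : ord_mod (pack (i, j)) = i by apply: val_inj; exact: pack_mod (i, j).
Qed.

Lemma card_ord_mod_le (M : nat) (A : {set 'I_n}) :
  #|[set v : 'I_M | ord_mod v \in A]| <= #|A| * (M %/ n).+1.
Proof.
have div_lt (v : 'I_M) : v %/ n < (M %/ n).+1 by rewrite ltnS leq_div2r // ltnW.
pose unpack (v : 'I_M) : 'I_n * 'I_(M %/ n).+1 := (ord_mod v, Ordinal (div_lt v)).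
have unpack_inj : injective unpack.
  move=> v w [vw_mod vw_div]; apply: val_inj.
  by rewrite /= (divn_eq v n) (divn_eq w n) vw_mod vw_div.
rewrite -[(M %/ n).+1]card_ord -cardsT -cardsX -(card_imset _ unpack_inj).
apply: subset_leq_card; apply/subsetP => x /imsetP [v]; rewrite inE => vA ->.
by rewrite in_setX vA inE.
Qed.

Variable b : nat.

Lemma card_coins : #|{ffun 'I_b -> bool}| = 2 ^ b.
Proof. by rewrite card_ffun card_bool card_ord. Qed.

Definition sample (u : {ffun 'I_b -> bool}) : 'I_n := ord_mod (enum_rank u).

Lemma card_sample (A : {set 'I_n}) :
  #|[set u | sample u \in A]| = #|[set v : 'I_#|{ffun 'I_b -> bool}| | ord_mod v \in A]|.
Proof.
rewrite -(card_imset _ (@enum_rank_inj _)); apply: eq_card => v; rewrite inE.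
apply/imsetP/idP => [[u] | vA]; first by rewrite inE => uA ->.
by exists (enum_val v); rewrite ?inE /sample enum_valK.
Qed.

Lemma card_sample_ge (A : {set 'I_n}) : #|A| * (2 ^ b %/ n) <= #|[set u | sample u \in A]|.
Proof. by rewrite card_sample -card_coins; exact: card_ord_mod_ge. Qed.

Lemma card_sample_le (A : {set 'I_n}) : #|[set u | sample u \in A]| <= #|A| * (2 ^ b %/ n).+1.
Proof. by rewrite card_sample -card_coins; exact: card_ord_mod_le. Qed.

(* [s.+1 * b] reduces to [b + s * b]: the first block of [b] coins draws a
   sample and the remaining [s * b] coins draw the others. *)
Fixpoint samples (s : nat) : {ffun 'I_(s * b) -> bool} -> seq 'I_n :=
  match s return {ffun 'I_(s * b) -> bool} -> seq 'I_n with
  | 0 => fun _ => [::]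
  | s'.+1 => fun r => sample (@lblock _ b (s' * b) r) :: @samples s' (@rblock _ b (s' * b) r)
  end.

Lemma size_samples s r : size (@samples s r) = s.
Proof. by elim: s r => //= s IH r; rewrite IH. Qed.

Fixpoint all_hist (G : seq 'I_n -> 'I_n -> bool) (H l : seq 'I_n) : bool :=
  if l is i :: l' then G H i && all_hist G (rcons H i) l' else true.

Lemma card_all_hist_samples G H s lo hi :
  (forall h, size h < size H + s -> lo <= #|[set u | G h (sample u)]| <= hi) ->
  lo ^ s <= #|[set r | all_hist G H (@samples s r)]| <= hi ^ s.
Proof.
elim: s H => [|s IH] H G_bounds.
  have -> : [set r | all_hist G H (@samples 0 r)] = setT by apply/setP => r; rewrite !inE.
  by rewrite cardsT card_ffun card_bool card_ord.
have -> : #|[set r | all_hist G H (@samples s.+1 r)]| =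
    \sum_u #|[set v | G H (sample u) && all_hist G (rcons H (sample u)) (@samples s v)]|.
  exact: (card_blocks (fun u v =>
    G H (sample u) && all_hist G (rcons H (sample u)) (@samples s v))).
rewrite !expnS; apply: card_sum_bounds => [|u _].
  by apply: G_bounds; rewrite addnS ltnS leq_addr.
by apply: IH => h; rewrite size_rcons addSnnS; exact: G_bounds.
Qed.

Variables (S : eqType) (dec : S -> word S n).

Definition idx0 : 'I_n := Ordinal n_gt0.

Definition sample_tester (s : nat) : tester n S :=
  @Tester n S (s * b) s.+1 (fun r a => nth idx0 (idx0 :: samples r) (size a))
    (fun r ans => if ans is a :: ans' then ans' == map (dec a) (samples r) else false).

Lemma answers_eq_map (orc : seq 'I_n -> 'I_n -> S) (y : word S n) H l :
  (answers orc H l == map y l) = all_hist (fun h i => orc h i == y i) H l.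
Proof. by elim: l H => //= i l IH H; rewrite eqseq_cons IH. Qed.

Lemma outcome_sample_tester s orc r :
  outcome (sample_tester s) orc r =
  all_hist (fun h i => orc h i == dec (orc [::] idx0) i) [:: idx0] (samples r).
Proof.
rewrite /outcome /=.
have := @exec_nonadaptive n S (idx0 :: samples r) idx0 _ orc s.+1 [::] (fun _ => erefl).
rewrite /= take_oversize ?size_samples // => -> //.
by rewrite answers_eq_map.
Qed.

End Sampling.

(** * Upper bound in the online-corruption model *)

Section SampleTesterOnline.
Variables (S : eqType) (n : nat) (n_gt0 : 0 < n) (b : nat) (dec : S -> word S n).
Variables (s t : nat) (x : word S n) (adv : seq 'I_n -> word S n).
Hypothesis adv_ok : online_adversary t x adv.

Local Notation T := (sample_tester n_gt0 b dec s).
Local Notation y := (dec (x (idx0 n_gt0))).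
Local Notation M := (2 ^ b).
Local Notation q := (2 ^ b %/ n).
Local Notation coin_block := {ffun 'I_b -> bool}.
Local Notation G := (fun h i => adv h i == y i).
Local Notation good h := [set u : coin_block | G h (sample n_gt0 u)].
Local Notation bad h := [set i | adv h i != y i].
Local Notation accepted := [set r | outcome T (online_oracle adv) r].

Lemma coins_sample_tester : 2 ^ coins T = M ^ s.
Proof. by rewrite /= mulnC expnM. Qed.

Lemma hdist_adversary h : hdist x (adv h) <= size h * t.
Proof.
elim/last_ind: h => [|h i IH].
  by rewrite mul0n hdistC (eq_hdist _ adv_ok.1) hdistxx.
apply: leq_trans (hdist_triangle x (adv h) _) _.
by rewrite size_rcons mulSn addnC leq_add // adv_ok.2.
Qed.

Lemma card_accepted :
  #|accepted| =
  #|[set r : {ffun 'I_(s * b) -> bool} | all_hist G [:: idx0 n_gt0] (samples n_gt0 r)]|.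
Proof. by apply: eq_card => r; rewrite !inE outcome_sample_tester /online_oracle adv_ok.1. Qed.

Lemma card_good h :
  #|good h| = M - #|[set u : coin_block | sample n_gt0 u \in bad h]|.
Proof.
rewrite -(card_coins b) -(cardsC [set u : coin_block | sample n_gt0 u \in bad h]) addKn.
by apply: eq_card => u; rewrite !inE negbK.
Qed.

Lemma sample_tester_accepts :
  y =1 x -> 3 * s * (s * t * q.+1) <= M -> accepts_whp T (online_oracle adv).
Proof.
move=> yx small; rewrite /accepts_whp coins_sample_tester card_accepted.
pose lo := M - s * t * q.+1.
have bounds h : size h < size [:: idx0 n_gt0] + s -> lo <= #|good h| <= M.
  move=> h_small; rewrite card_good leq_subr andbT leq_sub2l //.
  apply: leq_trans (card_sample_le _ _ _) _; rewrite leq_mul2r; apply/orP; right.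
  have -> : #|bad h| = hdist x (adv h).
    by rewrite hdistC; apply: eq_card => i; rewrite !inE yx.
  apply: leq_trans (hdist_adversary h) _; rewrite leq_mul2r; apply/orP; right.
  by move: h_small; rewrite /= add1n ltnS.
have /andP [lo_le _] := card_all_hist_samples (G := G) bounds.
apply: leq_trans (_ : 2 * M ^ s <= 3 * lo ^ s) _; last by rewrite leq_mul2l lo_le orbT.
apply: (acceptance_margin (beta := s * t * q.+1)) small; rewrite ?leq_subr // /lo.
by move: (s * t * q.+1) => k; move: (2 ^ b) => m; lia.
Qed.

Lemma card_accepted_le : #|accepted| <= (M - (hdist x y - s * t) * q) ^ s.
Proof.
rewrite card_accepted.
have bounds h : size h < size [:: idx0 n_gt0] + s ->
    0 <= #|good h| <= M - (hdist x y - s * t) * q.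
  move=> h_small; rewrite card_good leq_sub2l //.
  apply: leq_trans (card_sample_ge _ _ _); rewrite leq_mul2r; apply/orP; right.
  have := hdist_triangle x (adv h) y; have := hdist_adversary h.
  have : size h * t <= s * t.
    by rewrite leq_mul2r; move: h_small; rewrite /= add1n ltnS => ->; rewrite orbT.
  rewrite /hdist; set X := #|[set i | adv h i != y i]|; set Y := #|[set i | x i != y i]|.
  set Z := #|[set i | x i != adv h i]|; clearbody X Y Z; lia.
by have /andP [_ ->] := card_all_hist_samples (G := G) bounds.
Qed.

End SampleTesterOnline.

Section OnlineUpperBound.
Local Open Scope R_scope.

Lemma corruption_budget (eps : R) (n t : nat) : 0 < eps < 1 -> (0 < n)%N ->
  INR t <= / 1000 * eps ^ 2 * INR n / ln (INR n) -> 500 * INR t <= eps ^ 2 * INR n.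
Proof.
move=> eps01 n_gt0 t_le; have := pos_INR n; have := pos_INR t.
have [n1|n_ge2] := leqP n 1.
  (* [ln 1 = 0] and [x / 0 = 0], so the hypothesis forces [t = 0]. *)
  have n_eq : n = 1%N by lia.
  by move: t_le; rewrite n_eq; change (INR 1) with 1; rewrite ln_1 Rdiv_0_r; nra.
have ln_gt : / 2 < ln (INR n).
  have : 2 <= INR n by have := le_INR 2 n (elimT leP n_ge2).
  case/Rle_lt_or_eq => [lt2 | <-]; last exact: ln_lt_2.
  by apply: Rlt_trans ln_lt_2 (ln_increasing _ _ _ lt2); lra.
have ln_pos : 0 < ln (INR n) by lra.
move: t_le; rewrite (Rle_div_iff _ _ ln_pos); nra.
Qed.

Lemma sample_budget (eps : R) (n s t : nat) : 0 < eps ->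
  500 * INR t <= eps ^ 2 * INR n -> INR s * eps <= 9 -> (6 * s * s * t <= n)%N.
Proof.
move=> eps_gt0 t_le s_le; apply/leP/INR_le; rewrite !mult_INR.
have s_eps_sq : (INR s * eps) ^ 2 <= 81.
  have : 0 <= INR s * eps by apply: Rmult_le_pos; [exact: pos_INR | lra].
  by move: s_le; move: (INR s * eps) => u; rewrite /=; nra.
have : eps ^ 2 * (INR 6 * INR s * INR s * INR t) <= eps ^ 2 * INR n.
  have -> : INR 6 = 6 by rewrite INR_IZR_INZ.
  have := pos_INR t; move: s_eps_sq; rewrite /=; nra.
have : 0 < eps ^ 2 by apply: pow_lt.
move: (eps ^ 2) => e; nra.
Qed.

Lemma rejection_gap (eps : R) (n M s t d : nat) : 0 < eps < 1 -> (0 < n <= M)%N ->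
  (6 * s * s * t <= n)%N -> 8 < INR s * eps -> eps * INR n <= INR d -> (d <= n)%N ->
  INR (M - (d - s * t) * (M %/ n)) <= INR M * (1 - eps / 4).
Proof.
move=> eps01 /andP [n_gt0 nM] budget s_big d_ge d_le.
set q := (M %/ n)%N.
have nq_le : INR n * INR q <= INR M.
  by have := le_INR _ _ (elimT leP (leq_divM M n)); rewrite mult_INR -/q; lra.
have M_le : INR M <= 2 * INR n * INR q.
  have : (M <= 2 * n * q)%N.
    have := ltn_ceil M n_gt0; have : (0 < q)%N by rewrite divn_gt0.
    rewrite -/q; nia.
  move/leP/le_INR; rewrite !mult_INR; have -> : INR 2 = 2 by []; lra.
have st_ge0 : 0 <= INR s * INR t by apply: Rmult_le_pos; exact: pos_INR.
have st_le : INR s * INR t * 48 <= eps * INR n.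
  have := le_INR _ _ (elimT leP budget); rewrite !mult_INR.
  have -> : INR 6 = 6 by rewrite INR_IZR_INZ.
  have : 8 * (INR s * INR t) <= INR s * eps * (INR s * INR t) by nra.
  nra.
have st_d : (s * t <= d)%N by apply/leP/INR_le; rewrite mult_INR; lra.
have dq_le : ((d - s * t) * q <= M)%N.
  apply: leq_trans (_ : n * q <= M)%N; last by rewrite mulnC leq_divM.
  by rewrite leq_mul2r (leq_trans (leq_subr _ _) d_le) orbT.
rewrite minus_INR; last exact/leP.
rewrite mult_INR minus_INR; last exact/leP.
rewrite mult_INR.
have : (eps * INR n / 2) * INR q <= (INR d - INR s * INR t) * INR q.
  by apply: Rmult_le_compat_r; [exact: pos_INR | nra].
nra.
Qed.

Lemma rejection_margin (eps : R) (n M s t d : nat) : 0 < eps < 1 -> (0 < n <= M)%N ->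
  (6 * s * s * t <= n)%N -> 8 < INR s * eps -> eps * INR n <= INR d -> (d <= n)%N ->
  (3 * (M - (d - s * t) * (M %/ n)) ^ s <= M ^ s)%N.
Proof.
move=> eps01 nM budget s_big d_ge d_le.
have gap := rejection_gap eps01 nM budget s_big d_ge d_le.
have pow_gap : INR (M - (d - s * t) * (M %/ n)) ^ s <= INR M ^ s * (1 - eps / 4) ^ s.
  by rewrite -Rpow_mult_distr; apply: pow_incr; split; [exact: pos_INR | exact: gap].
have third : (1 - eps / 4) ^ s <= / 3 by apply: pow_one_sub_le_third; lra.
have Ms_ge0 : 0 <= INR M ^ s by apply: pow_le; exact: pos_INR.
apply/leP/INR_le; rewrite mult_INR !INR_expn.
have -> : INR 3 = 3 by rewrite INR_IZR_INZ.
move: pow_gap third Ms_ge0; move: (INR M ^ s) ((1 - eps / 4) ^ s) => P g; nra.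
Qed.

Lemma sample_tester_online (eps : R) (n t s : nat) (n_gt0 : (0 < n)%N) : 0 < eps < 1 ->
  (6 * s * s * t <= n)%N -> 8 < INR s * eps ->
  online_tester codewords eps t (sample_tester n_gt0 n (codeword n) s).
Proof.
move=> eps01 budget s_big x adv adv_ok.
have nM : (n <= 2 ^ n)%N by apply: ltnW; rewrite ltn_expl.
have nM' : (0 < n <= 2 ^ n)%N by rewrite n_gt0 nM.
split => [[a x_code] | x_far].
  apply: sample_tester_accepts adv_ok _ (acceptance_budget n_gt0 nM budget) => i.
  have -> : x (idx0 n_gt0) = a by rewrite x_code.
  by rewrite (x_code i).
set y := codeword n (x (idx0 n_gt0)).
have far_y : eps * INR n <= INR (hdist x y).
  by rewrite -Rle_div_iff; [apply: x_far; exists (x (idx0 n_gt0)) | exact/lt_0_INR/ltP].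
have margin := rejection_margin eps01 nM' budget s_big far_y (hdist_le x y).
have acc_le := card_accepted_le n_gt0 n (codeword n) s adv_ok.
have split_acc :=
  card_outcome_split (sample_tester n_gt0 n (codeword n) s) (online_oracle adv).
rewrite /rejects_whp; rewrite coins_sample_tester in split_acc *.
move: acc_le margin split_acc; move: (_ ^ s)%N (_ ^ s)%N => h m.
set acc := #|[set r | outcome _ _ r]|; set rej := #|[set r | ~~ outcome _ _ r]|.
clearbody acc rej; lia.
Qed.

Lemma online_upper_bound (eps : R) (n t : nat) : 0 < eps < 1 -> (0 < n)%N ->
  INR t <= / 1000 * eps ^ 2 * INR n / ln (INR n) ->
  exists T : tester n nat, online_tester codewords eps t T /\ INR (nqueries T) <= 10 * / eps.
Proof.
move=> eps01 n_gt0 t_le.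
have : 0 < 8 / eps by apply: Rdiv_lt_0_compat; lra.
move/exists_nat_between => [s [s_lo s_hi]].
have E : 8 / eps * eps = 8 by field; lra.
have s_big : 8 < INR s * eps by nra.
have s_small : INR s * eps <= 9 by nra.
have budget := sample_budget (proj1 eps01) (corruption_budget eps01 n_gt0 t_le) s_small.
exists (sample_tester n_gt0 n (codeword n) s); split; first exact: sample_tester_online.
change (INR s.+1 <= 10 / eps); rewrite S_INR Rle_div_iff; lra.
Qed.

End OnlineUpperBound.

Local Open Scope R_scope.

Theorem corollary3p2 :
  exists (S : eqType) (P : property S),
    (* Upper bound in the online-corruption model. *)
    (exists (c : R) (d : nat) (C : R) (e : nat),
       (0 < c) /\ (0 < C) /\
       forall eps : R, (0 < eps < 1) ->
       forall (n t : nat), (0 < n)%N ->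
         (INR t <= c * eps ^ d * INR n / ln (INR n)) ->
         exists T : tester n S,
           online_tester P eps t T /\
           (INR (nqueries T) <= C * (/ eps) ^ e))
    /\
    (* Lower bound for offline-erasure-resilient testers. *)
    (forall eps : R, (0 < eps < 1) ->
     forall c1 : R, (0 < c1) ->
     exists (c2 : R) (k n0 : nat), (0 < c2) /\
       forall n : nat, (n0 <= n)%N ->
       forall alpha : R,
         (c1 / ln (ln (INR n)) <= alpha) ->
         (alpha + eps < 1) ->
         forall T : tester n (option S),
           er_tester P alpha eps T ->
           (c2 * ln (INR n) / (ln (ln (INR n))) ^ k <= INR (nqueries T))).
Proof.
exists nat, codewords; split.
  exists (/ 1000), 2%N, 10, 1%N; do 2 (split; first lra).
  by move=> eps eps01 n t n_gt0 t_le; rewrite pow_1; exact: online_upper_bound.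
move=> eps eps01 c1 c1_gt0.
have [n0 n0_ok] := erasure_lower_bound eps01 c1_gt0.
exists 1, 0%N, n0; split; first lra.
move=> n n_ge alpha le_alpha _ T T_ok.
by rewrite pow_O Rdiv_1_r Rmult_1_l; exact: n0_ok le_alpha T T_ok.
Qed.
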